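(* Let $m_1,m_2,m_3,m_4>0$, $M=\sum m_i$, $I(\mathbf{r})=\frac{1}{2M}\sum_{i<j}m_im_jr_{ij}^2$ and $P(\mathbf{r})=r_{12}r_{34}+r_{14}r_{23}-r_{13}r_{24}$ for $\mathbf{r}=(r_{12},r_{13},r_{14},r_{23},r_{24},r_{34})\in\mathbb{R}^6$. Then the set $\mathcal{M}=\{\mathbf{r}\in\mathbb{R}^6: I(\mathbf{r})=1,\ P(\mathbf{r})=0\}$ is diffeomorphic to the oriented Grassmannian $\mathrm{Gr}_+(2,4)=SO(4)/(SO(2)\times SO(2))$ of oriented 2-planes in $\mathbb{R}^4$, and to $S^2\times S^2$. *)

From HB Require Import structures.
From mathcomp Require Import all_boot all_order all_algebra.
From mathcomp Require Import all_classical all_reals all_analysis.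
Set Implicit Arguments. Unset Strict Implicit. Unset Printing Implicit Defensive.
Import Order.TTheory GRing.Theory Num.Theory.
Import numFieldNormedType.Exports.
Local Open Scope classical_set_scope.
Local Open Scope ring_scope.

(* C^k maps between normed spaces: existence of all directional derivatives
   of order <= k everywhere, all of them continuous (equivalent to the usual
   C^k in finite dimension). *)
Fixpoint Ck {R : realType} {V W : normedModType R} (k : nat) (f : V -> W) : Prop :=
  match k with
  | 0%N => continuous f
  | k'.+1 => continuous f /\ (forall x v, derivable f x v) /\
             (forall v : V, Ck k' (fun x => 'D_v f x))
  end.

Definition smooth {R : realType} {V W : normedModType R} (f : V -> W) : Prop :=
  forall k, Ck k f.

Definition diffeomorphic {R : realType} {V W : normedModType R}
  (A : set V) (B : set W) : Prop :=
  exists (f : V -> W) (g : W -> V),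
    [/\ smooth f, smooth g, f @` A `<=` B, g @` B `<=` A &
        (forall x, A x -> g (f x) = x) /\ (forall y, B y -> f (g y) = y)].

(* coordinates of r in R^6 : r = (r12, r13, r14, r23, r24, r34) *)
Definition rc {R : realType} (r : 'rV[R]_6) (k : nat) : R := r ord0 (inord k).

Definition inertia {R : realType} (m1 m2 m3 m4 : R) (r : 'rV[R]_6) : R :=
  (2 * (m1 + m2 + m3 + m4))^-1 *
  (m1 * m2 * (rc r 0) ^+ 2 + m1 * m3 * (rc r 1) ^+ 2 + m1 * m4 * (rc r 2) ^+ 2
 + m2 * m3 * (rc r 3) ^+ 2 + m2 * m4 * (rc r 4) ^+ 2 + m3 * m4 * (rc r 5) ^+ 2).

Definition Ppoly {R : realType} (r : 'rV[R]_6) : R :=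
  rc r 0 * rc r 5 + rc r 2 * rc r 3 - rc r 1 * rc r 4.

Definition Mset {R : realType} (m1 m2 m3 m4 : R) : set 'rV[R]_6 :=
  [set r | inertia m1 m2 m3 m4 r = 1 /\ Ppoly r = 0].

Definition SO4 {R : realType} : set 'M[R]_4 :=
  [set Q | Q *m Q^T = 1%:M /\ \det Q = 1].

(* Gr_+(2,4) = SO(4)/(SO(2)xSO(2)), realized as the SO(4)-orbit (under
   conjugation) of E = e1 e2^T - e2 e1^T, whose stabilizer is SO(2)xSO(2);
   the point Q E Q^T = u v^T - v u^T encodes the oriented plane spanned by
   the (oriented) orthonormal pair u = Q e1, v = Q e2. *)
Definition E12 {R : realType} : 'M[R]_4 :=
  \matrix_(i < 4, j < 4)
    (if (val i == 0%N) && (val j == 1%N) then 1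
     else if (val i == 1%N) && (val j == 0%N) then -1 else 0).

Definition Grplus24 {R : realType} : set 'M[R]_4 :=
  [set Q *m E12 *m Q^T | Q in SO4].

Definition S2xS2 {R : realType} : set 'rV[R]_6 :=
  [set x | (rc x 0)^+2 + (rc x 1)^+2 + (rc x 2)^+2 = 1 /\
           (rc x 3)^+2 + (rc x 4)^+2 + (rc x 5)^+2 = 1].

From HB Require Import structures.
From mathcomp Require Import all_boot all_order all_algebra.
From mathcomp Require Import all_classical all_reals all_analysis.
From mathcomp Require Import ring lra.
Import Order.TTheory GRing.Theory Num.Theory.
Import numFieldNormedType.Exports.
Local Open Scope classical_set_scope.
Local Open Scope ring_scope.

(* Scaling the coordinate r_ij by sqrt (m_i m_j / 2M) is a linear isomorphism
   taking the level set I = 1 to the unit sphere of R^6 = Lambda^2 R^4, and it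
   multiplies P by a positive constant; so M becomes the set of unit 2-vectors
   satisfying the Pluecker relation, i.e. the unit decomposable 2-vectors u /\ v.
   Writing a 2-vector x as the sum of its self-dual and anti-self-dual parts
   a, b in R^3 gives |a|^2 = |x|^2 + 2 P x and |b|^2 = |x|^2 - 2 P x, which
   identifies this set linearly with S^2 x S^2.  Sending x to its skew-symmetric
   4 x 4 matrix identifies it with the SO(4)-orbit of E12: Q E12 Q^T is
   u v^T - v u^T for the orthonormal first columns u, v of Q, and Lagrange's
   identity gives |u /\ v| = 1; conversely, for (a, b) in S^2 x S^2 pick unit
   quaternions p, q with p i p^* = a and q i q^* = b, then the rotation
   x |-> p x q^* of R^4 = H conjugates E12 to the 2-vector with parts (a, b).
   All the maps involved are linear, hence smooth. *)

Section LinearDiffeomorphisms.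
Context {R : realType}.

Lemma Ck_cst (V W : normedModType R) k (c : W) : Ck k (fun _ : V => c).
Proof.
elim: k c => [|k IHk] c /=; first exact: cst_continuous.
split; first exact: cst_continuous.
split=> [x v|v]; first exact: derivable_cst.
have -> : (fun x => 'D_v (fun _ : V => c) x) = fun _ => 0.
  by apply/funext => x; exact: derive_cst.
exact: IHk.
Qed.

Lemma linear_mx_continuous m n (W : normedModType R)
    (f : {linear 'M[R]_(m, n) -> W}) :
  continuous f.
Proof.
have -> : (f : _ -> _) =
    fun x => \sum_(i < m) \sum_(j < n) x i j *: f (delta_mx i j).
  apply/funext => x; rewrite {1}(matrix_sum_delta x) linear_sum.
  apply: eq_bigr => i _; rewrite linear_sum; apply: eq_bigr => j _.
  by rewrite linearZ.
apply: continuous_big => [|i _]; first exact: add_continuous.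
apply: continuous_big => [|j _ x]; first exact: add_continuous.
exact/continuousZr_tmp/coord_continuous.
Qed.

Lemma linear_mx_smooth m n (W : normedModType R) (f : 'M[R]_(m, n) -> W) :
  linear f -> smooth f.
Proof.
move=> f_lin.
pose fL : {linear _ -> W} := HB.pack f (GRing.isLinear.Build _ _ _ _ f f_lin).
have fL_cont : continuous fL := @linear_mx_continuous _ _ _ fL.
have fL_diff x : differentiable fL x := linear_differentiable (f := fL) x fL_cont.
case=> [|k] //=; split=> //; split=> [x v|v]; first exact: diff_derivable.
have -> : (fun x => 'D_v f x) = fun _ => f v.
  by apply/funext => x; rewrite (deriveE (f := fL)) // diff_lin.
exact: Ck_cst.
Qed.

Definition linear_equiv {m n p q} (A : set 'M[R]_(m, n)) (B : set 'M[R]_(p, q)) :=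
  exists (f : 'M[R]_(m, n) -> 'M[R]_(p, q)) (g : 'M[R]_(p, q) -> 'M[R]_(m, n)),
    [/\ linear f, linear g, f @` A `<=` B, g @` B `<=` A &
        (forall x, A x -> g (f x) = x) /\ (forall y, B y -> f (g y) = y)].

Lemma linear_equiv_diffeomorphic m n p q (A : set 'M[R]_(m, n))
    (B : set 'M[R]_(p, q)) :
  linear_equiv A B -> diffeomorphic A B.
Proof.
case=> f [g [f_lin g_lin fAB gBA fK]].
by exists f, g; split=> //; exact: linear_mx_smooth.
Qed.

Lemma linear_comp m n p q (U : 'M[R]_(m, n) -> 'M[R]_(p, q)) (W : normedModType R)
    (f : 'M[R]_(p, q) -> W) :
  linear f -> linear U -> linear (f \o U).
Proof. by move=> f_lin U_lin a x y /=; rewrite U_lin f_lin. Qed.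

Lemma linear_equiv_trans m n p q s t (A : set 'M[R]_(m, n))
    (B : set 'M[R]_(p, q)) (C : set 'M[R]_(s, t)) :
  linear_equiv A B -> linear_equiv B C -> linear_equiv A C.
Proof.
case=> f [g [f_lin g_lin fAB gBA [fK gK]]].
case=> f' [g' [f'_lin g'_lin fBC gCB [f'K g'K]]].
exists (f' \o f), (g \o g'); split; try exact: linear_comp.
- by move=> _ [x Ax <-]; apply: fBC; exists (f x) => //; apply: fAB; exists x.
- by move=> _ [y Cy <-]; apply: gBA; exists (g' y) => //; apply: gCB; exists y.
split=> [x Ax|y Cy] /=.
  by rewrite f'K ?fK //; apply: fAB; exists x.
by rewrite gK ?g'K //; apply: gCB; exists y.
Qed.

Lemma linear_equiv_preimage m n (P : 'M[R]_n) (B : set 'M[R]_(m, n)) :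
  P \in unitmx -> linear_equiv [set x | B (x *m P)] B.
Proof.
move=> P_unit; exists (mulmx^~ P), (mulmx^~ (invmx P)); split.
- by move=> a x y; rewrite mulmxDl scalemxAl.
- by move=> a x y; rewrite mulmxDl scalemxAl.
- by move=> _ [x Bx <-].
- by move=> _ [y By <-] /=; rewrite mulmxKV.
by split=> [x _|y _]; rewrite ?mulmxK ?mulmxKV.
Qed.

End LinearDiffeomorphisms.

Section Coordinates.
Context {R : realType}.

Definition row6 (x0 x1 x2 x3 x4 x5 : R) : 'rV[R]_6 :=
  \row_(k < 6) nth 0 [:: x0; x1; x2; x3; x4; x5] k.

Lemma rc_row6 x0 x1 x2 x3 x4 x5 k : (k < 6)%N ->
  rc (row6 x0 x1 x2 x3 x4 x5) k = nth 0 [:: x0; x1; x2; x3; x4; x5] k.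
Proof. by move=> lt_k6; rewrite /rc mxE inordK. Qed.

Lemma rc_ext (x y : 'rV[R]_6) :
  (forall k, (k < 6)%N -> rc x k = rc y k) -> x = y.
Proof.
by move=> eq_xy; apply/rowP => k; have := eq_xy k (ltn_ord k); rewrite /rc inord_val.
Qed.

Lemma row6_rc (x : 'rV[R]_6) :
  row6 (rc x 0) (rc x 1) (rc x 2) (rc x 3) (rc x 4) (rc x 5) = x.
Proof.
by apply: rc_ext => k lt_k6; rewrite rc_row6 //; case: k lt_k6 => [|[|[|[|[|[|k]]]]]].
Qed.

Lemma rc_lin a (x y : 'rV[R]_6) k : rc (a *: x + y) k = a * rc x k + rc y k.
Proof. by rewrite /rc !mxE. Qed.

Lemma rc_mul_diag (x c : 'rV[R]_6) k : rc (x *m diag_mx c) k = rc x k * rc c k.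
Proof. by rewrite /rc mul_mx_diag mxE. Qed.

Definition ent (A : 'M[R]_4) (i j : nat) : R := A (inord i) (inord j).

Lemma ent_mx (f : nat -> nat -> R) i j : (i < 4)%N -> (j < 4)%N ->
  ent (\matrix_(a < 4, b < 4) f a b) i j = f i j.
Proof. by move=> lt_i4 lt_j4; rewrite /ent mxE !inordK. Qed.

Lemma ent_ext (A B : 'M[R]_4) :
  (forall i j, (i < 4)%N -> (j < 4)%N -> ent A i j = ent B i j) -> A = B.
Proof.
move=> eq_AB; apply/matrixP => i j.
by have := eq_AB i j (ltn_ord i) (ltn_ord j); rewrite /ent !inord_val.
Qed.

Lemma ent_lin a (A B : 'M[R]_4) i j : ent (a *: A + B) i j = a * ent A i j + ent B i j.
Proof. by rewrite /ent !mxE. Qed.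

Lemma ent_mul (A B : 'M[R]_4) i j : ent (A *m B) i j =
  ent A i 0 * ent B 0 j + ent A i 1 * ent B 1 j
  + ent A i 2 * ent B 2 j + ent A i 3 * ent B 3 j.
Proof.
rewrite /ent mxE !big_ord_recr big_ord0 /= add0r.
by do 4 f_equal; try f_equal; apply: val_inj; rewrite /= inordK.
Qed.

Lemma ent_tr (A : 'M[R]_4) i j : ent A^T i j = ent A j i.
Proof. by rewrite /ent mxE. Qed.

Lemma ent_scalar a i j : (i < 4)%N -> (j < 4)%N -> ent a%:M i j = (i == j)%:R * a.
Proof.
by move=> lt_i4 lt_j4; rewrite /ent mxE -(inj_eq val_inj) /= !inordK // mulr_natl.
Qed.

End Coordinates.

Section PluckerSphere.
Context {R : realType}.

Definition sqnorm6 (x : 'rV[R]_6) : R :=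
  rc x 0 ^+ 2 + rc x 1 ^+ 2 + rc x 2 ^+ 2 + rc x 3 ^+ 2 + rc x 4 ^+ 2 + rc x 5 ^+ 2.

Definition plucker_sphere : set 'rV[R]_6 := [set x | sqnorm6 x = 1 /\ Ppoly x = 0].

(* Coordinates of the self-dual and anti-self-dual parts of the 2-vector
   \sum x_ij e_i /\ e_j in the bases (e12 + e34, e13 - e24, e14 + e23) and
   (e12 - e34, e13 + e24, e14 - e23). *)
Definition sd_split (x : 'rV[R]_6) : 'rV[R]_6 :=
  row6 (rc x 0 + rc x 5) (rc x 1 - rc x 4) (rc x 2 + rc x 3)
       (rc x 0 - rc x 5) (rc x 1 + rc x 4) (rc x 2 - rc x 3).

Definition sd_join (y : 'rV[R]_6) : 'rV[R]_6 :=
  row6 ((rc y 0 + rc y 3) / 2) ((rc y 1 + rc y 4) / 2) ((rc y 2 + rc y 5) / 2)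
       ((rc y 2 - rc y 5) / 2) ((rc y 4 - rc y 1) / 2) ((rc y 0 - rc y 3) / 2).

Lemma sd_split_linear : linear sd_split.
Proof.
move=> a x y; apply: rc_ext => k lt_k6; rewrite rc_lin !rc_row6 //.
by case: k lt_k6 => [|[|[|[|[|[|k]]]]]] //= _; rewrite !rc_lin; ring.
Qed.

Lemma sd_join_linear : linear sd_join.
Proof.
move=> a x y; apply: rc_ext => k lt_k6; rewrite rc_lin !rc_row6 //.
by case: k lt_k6 => [|[|[|[|[|[|k]]]]]] //= _; rewrite !rc_lin; ring.
Qed.

Lemma sd_splitK : cancel sd_split sd_join.
Proof.
move=> x; apply: rc_ext => k lt_k6; rewrite rc_row6 //.
by case: k lt_k6 => [|[|[|[|[|[|k]]]]]] //= _; rewrite !rc_row6 //=; field.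
Qed.

Lemma sd_joinK : cancel sd_join sd_split.
Proof.
move=> y; apply: rc_ext => k lt_k6; rewrite rc_row6 //.
by case: k lt_k6 => [|[|[|[|[|[|k]]]]]] //= _; rewrite !rc_row6 //=; field.
Qed.

Lemma sqnorm_sd_split x :
  rc (sd_split x) 0 ^+ 2 + rc (sd_split x) 1 ^+ 2 + rc (sd_split x) 2 ^+ 2
    = sqnorm6 x + 2 * Ppoly x /\
  rc (sd_split x) 3 ^+ 2 + rc (sd_split x) 4 ^+ 2 + rc (sd_split x) 5 ^+ 2
    = sqnorm6 x - 2 * Ppoly x.
Proof. by rewrite /sqnorm6 /Ppoly !rc_row6 //=; split; ring. Qed.

Lemma sd_split_S2xS2 x : plucker_sphere x -> S2xS2 (sd_split x).
Proof.
by case=> x1 Px0; have [] := sqnorm_sd_split x; rewrite x1 Px0 mulr0 addr0 subr0.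
Qed.

Lemma sd_join_plucker_sphere y : S2xS2 y -> plucker_sphere (sd_join y).
Proof.
case=> y1 y2; have [] := sqnorm_sd_split (sd_join y); rewrite sd_joinK y1 y2.
by split; lra.
Qed.

Lemma plucker_sphere_S2xS2 : linear_equiv plucker_sphere (@S2xS2 R).
Proof.
exists sd_split, sd_join; split.
- exact: sd_split_linear.
- exact: sd_join_linear.
- by move=> _ [x Nx <-]; exact: sd_split_S2xS2.
- by move=> _ [y Sy <-]; exact: sd_join_plucker_sphere.
by split=> [x|y] _; rewrite ?sd_splitK ?sd_joinK.
Qed.

End PluckerSphere.

Section MassWeights.
Context {R : realType} {m1 m2 m3 m4 : R}.
Hypotheses (m1_gt0 : 0 < m1) (m2_gt0 : 0 < m2) (m3_gt0 : 0 < m3) (m4_gt0 : 0 < m4).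

Let M2 : R := 2 * (m1 + m2 + m3 + m4).
Let w (a b : R) : R := Num.sqrt (a * b / M2).

Definition mass_weights : 'rV[R]_6 :=
  row6 (w m1 m2) (w m1 m3) (w m1 m4) (w m2 m3) (w m2 m4) (w m3 m4).

Let M2_gt0 : 0 < M2.
Proof. by rewrite /M2 mulr_gt0 // !addr_gt0. Qed.

Let pair_mass_gt0 (a b : R) : 0 < a -> 0 < b -> 0 < a * b / M2.
Proof. by move=> a_gt0 b_gt0; apply: divr_gt0 => //; exact: mulr_gt0. Qed.

Let w_gt0 (a b : R) : 0 < a -> 0 < b -> 0 < w a b.
Proof. by move=> a_gt0 b_gt0; rewrite /w sqrtr_gt0 pair_mass_gt0. Qed.

Let sqr_w (a b : R) : 0 < a -> 0 < b -> w a b ^+ 2 = a * b / M2.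
Proof. by move=> a_gt0 b_gt0; rewrite /w sqr_sqrtr // ltW ?pair_mass_gt0. Qed.

Let mul_w (a b c d : R) : 0 < a -> 0 < b ->
  w a b * w c d = Num.sqrt (a * b * c * d / M2 ^+ 2).
Proof.
move=> a_gt0 b_gt0; rewrite /w -sqrtrM ?ltW ?pair_mass_gt0 //.
by rewrite mulrACA -invfM -expr2 mulrA.
Qed.

Lemma inertia_mass_weights r :
  inertia m1 m2 m3 m4 r = sqnorm6 (r *m diag_mx mass_weights).
Proof.
rewrite /sqnorm6 !rc_mul_diag !rc_row6 //= !exprMn !sqr_w //.
by rewrite /inertia -/M2; ring.
Qed.

Lemma Ppoly_mass_weights r :
  Ppoly (r *m diag_mx mass_weights) = w m1 m2 * w m3 m4 * Ppoly r.
Proof.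
have w14_w23 : w m1 m4 * w m2 m3 = w m1 m2 * w m3 m4.
  by rewrite !mul_w //; congr Num.sqrt; ring.
have w13_w24 : w m1 m3 * w m2 m4 = w m1 m2 * w m3 m4.
  by rewrite !mul_w //; congr Num.sqrt; ring.
rewrite /Ppoly !rc_mul_diag !rc_row6 //=.
transitivity (rc r 0 * rc r 5 * (w m1 m2 * w m3 m4)
  + rc r 2 * rc r 3 * (w m1 m4 * w m2 m3) - rc r 1 * rc r 4 * (w m1 m3 * w m2 m4)).
  by ring.
by rewrite w14_w23 w13_w24; ring.
Qed.

Lemma Mset_preimage :
  Mset m1 m2 m3 m4 = [set r | plucker_sphere (r *m diag_mx mass_weights)].
Proof.
apply/funext => r; apply/propext.
rewrite /Mset /plucker_sphere /= inertia_mass_weights Ppoly_mass_weights.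
have w_neq0 : w m1 m2 * w m3 m4 != 0 by rewrite gt_eqF // mulr_gt0 ?w_gt0.
split=> -[-> P0]; split=> //; first by rewrite P0 mulr0.
by move/eqP: P0; rewrite mulf_eq0 (negPf w_neq0) => /eqP.
Qed.

Lemma mass_weights_unitmx : diag_mx mass_weights \in unitmx.
Proof.
rewrite unitmxE det_diag unitfE gt_eqF // prodr_gt0 // => k _.
by rewrite -[k]inord_val; case: k => [[|[|[|[|[|[|k]]]]]] //= _];
  rewrite -/(rc _ _) rc_row6 //= w_gt0.
Qed.

Lemma Mset_plucker_sphere : linear_equiv (Mset m1 m2 m3 m4) plucker_sphere.
Proof. by rewrite Mset_preimage; exact: linear_equiv_preimage mass_weights_unitmx. Qed.

End MassWeights.

Section Quaternions.
Context {R : realType}.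

Definition qnorm (p0 p1 p2 p3 : R) : R := p0 ^+ 2 + p1 ^+ 2 + p2 ^+ 2 + p3 ^+ 2.

(* The coordinates of p i p^* in the basis (i, j, k) of pure quaternions. *)
Definition hopf1 (p0 p1 p2 p3 : R) : R := p0 ^+ 2 + p1 ^+ 2 - p2 ^+ 2 - p3 ^+ 2.
Definition hopf2 (p0 p1 p2 p3 : R) : R := 2 * (p1 * p2 + p0 * p3).
Definition hopf3 (p0 p1 p2 p3 : R) : R := 2 * (p1 * p3 - p0 * p2).

Lemma hopf_surjective_up_to_scale (a1 a2 a3 : R) : a1 ^+ 2 + a2 ^+ 2 + a3 ^+ 2 = 1 ->
  exists p0 p1 p2 p3, [/\ 0 < qnorm p0 p1 p2 p3,
    hopf1 p0 p1 p2 p3 = qnorm p0 p1 p2 p3 * a1,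
    hopf2 p0 p1 p2 p3 = qnorm p0 p1 p2 p3 * a2 &
    hopf3 p0 p1 p2 p3 = qnorm p0 p1 p2 p3 * a3].
Proof.
move=> a_unit; have [a1_eqN1|a1_neqN1] := eqVneq a1 (-1).
  have a23 : a2 ^+ 2 + a3 ^+ 2 = 0 by move: a_unit; rewrite a1_eqN1; lra.
  have a2_0 : a2 = 0 by apply/eqP; rewrite -sqrf_eq0; nra.
  have a3_0 : a3 = 0 by apply/eqP; rewrite -sqrf_eq0; nra.
  exists 0, 0, 1, 0; rewrite /qnorm /hopf1 /hopf2 /hopf3 a1_eqN1 a2_0 a3_0.
  by split; lra.
have a1_gtN1 : -1 < a1.
  by rewrite lt_neqAle eq_sym a1_neqN1 /=; nra.
(* p = (1 + i.a) + i x a, the unnormalized quaternion rotating i onto a. *)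
exists (1 + a1), 0, (- a3), a2; rewrite /qnorm /hopf1 /hopf2 /hopf3.
have -> : (1 + a1) ^+ 2 + 0 ^+ 2 + (- a3) ^+ 2 + a2 ^+ 2 = 2 * (1 + a1) by nra.
by split; nra.
Qed.

Lemma hopf_surjective {a1 a2 a3 : R} : a1 ^+ 2 + a2 ^+ 2 + a3 ^+ 2 = 1 ->
  exists p0 p1 p2 p3, [/\ qnorm p0 p1 p2 p3 = 1, hopf1 p0 p1 p2 p3 = a1,
    hopf2 p0 p1 p2 p3 = a2 & hopf3 p0 p1 p2 p3 = a3].
Proof.
move=> /hopf_surjective_up_to_scale[p0 [p1 [p2 [p3 [N_gt0 h1 h2 h3]]]]].
set N := qnorm p0 p1 p2 p3 in N_gt0 h1 h2 h3.
pose s := (Num.sqrt N)^-1.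
have sN : s ^+ 2 * N = 1 by rewrite exprVn sqr_sqrtr ?ltW // mulVf ?gt_eqF.
exists (s * p0), (s * p1), (s * p2), (s * p3); split.
- by rewrite -sN /N /qnorm; ring.
- by rewrite -[RHS]mul1r -sN -mulrA -h1 /hopf1; ring.
- by rewrite -[RHS]mul1r -sN -mulrA -h2 /hopf2; ring.
- by rewrite -[RHS]mul1r -sN -mulrA -h3 /hopf3; ring.
Qed.

End Quaternions.

Section SkewMatrices.
Context {R : realType}.

Definition skew_entry (x : 'rV[R]_6) (i j : nat) : R :=
  match i, j with
  | 0, 1 => rc x 0 | 0, 2 => rc x 1 | 0, 3 => rc x 2
  | 1, 2 => rc x 3 | 1, 3 => rc x 4 | 2, 3 => rc x 5
  | 1, 0 => - rc x 0 | 2, 0 => - rc x 1 | 3, 0 => - rc x 2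
  | 2, 1 => - rc x 3 | 3, 1 => - rc x 4 | 3, 2 => - rc x 5
  | _, _ => 0
  end.

Definition skewmx (x : 'rV[R]_6) : 'M[R]_4 := \matrix_(i < 4, j < 4) skew_entry x i j.

Definition skew_coords (A : 'M[R]_4) : 'rV[R]_6 :=
  row6 (ent A 0 1) (ent A 0 2) (ent A 0 3) (ent A 1 2) (ent A 1 3) (ent A 2 3).

Lemma skewmx_linear : linear skewmx.
Proof.
move=> a x y; apply: ent_ext => i j lt_i4 lt_j4; rewrite ent_lin !ent_mx //.
by case: i lt_i4 => [|[|[|[|i]]]] //= _; case: j lt_j4 => [|[|[|[|j]]]] //= _;
  rewrite ?rc_lin; ring.
Qed.

Lemma skew_coords_linear : linear skew_coords.
Proof.
move=> a A B; apply: rc_ext => k lt_k6; rewrite rc_lin !rc_row6 //.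
by case: k lt_k6 => [|[|[|[|[|[|k]]]]]] //= _; rewrite ent_lin.
Qed.

Lemma skewmxK : cancel skewmx skew_coords.
Proof.
move=> x; apply: rc_ext => k lt_k6; rewrite rc_row6 //.
by case: k lt_k6 => [|[|[|[|[|[|k]]]]]] //= _; rewrite ent_mx.
Qed.

Lemma skew_coordsK (A : 'M[R]_4) : A^T = - A -> skewmx (skew_coords A) = A.
Proof.
move=> A_skew; have entN i j : ent A j i = - ent A i j.
  by rewrite -ent_tr A_skew /ent mxE.
have ent_diag i : ent A i i = 0.
  by have := entN i i; lra.
apply: ent_ext => i j lt_i4 lt_j4; rewrite ent_mx //.
by case: i lt_i4 => [|[|[|[|i]]]] //= _; case: j lt_j4 => [|[|[|[|j]]]] //= _;
  rewrite ?rc_row6 //= ?ent_diag // entN.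
Qed.

Lemma ent_E12 i j : (i < 4)%N -> (j < 4)%N -> ent (@E12 R) i j =
  if (i == 0%N) && (j == 1%N) then 1 else if (i == 1%N) && (j == 0%N) then -1 else 0.
Proof. by move=> lt_i4 lt_j4; rewrite /ent mxE /= !inordK. Qed.

Lemma trmx_E12 : E12^T = - E12 :> 'M[R]_4.
Proof.
apply: ent_ext => i j lt_i4 lt_j4; rewrite ent_tr /ent !mxE /= !inordK //.
by case: i lt_i4 => [|[|[|[|i]]]] //= _; case: j lt_j4 => [|[|[|[|j]]]] //= _;
  rewrite ?opprK ?oppr0.
Qed.

Lemma ent_conj_E12 (M : 'M[R]_4) i j :
  ent (M *m E12 *m M^T) i j = ent M i 0 * ent M j 1 - ent M i 1 * ent M j 0.
Proof. by rewrite !ent_mul !ent_tr !ent_E12 //=; ring. Qed.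

Lemma Grplus24_skew (A : 'M[R]_4) : Grplus24 A -> A^T = - A.
Proof.
case=> Q _ <-.
by rewrite !trmx_mul trmxK trmx_E12 mulNmx mulmxN mulmxA.
Qed.

End SkewMatrices.

Section Wedge.
Context {R : realType}.
Variables u0 u1 u2 u3 v0 v1 v2 v3 : R.

Definition wedge : 'rV[R]_6 :=
  row6 (u0 * v1 - u1 * v0) (u0 * v2 - u2 * v0) (u0 * v3 - u3 * v0)
       (u1 * v2 - u2 * v1) (u1 * v3 - u3 * v1) (u2 * v3 - u3 * v2).

Lemma sqnorm6_wedge : sqnorm6 wedge =
  (u0 * u0 + u1 * u1 + u2 * u2 + u3 * u3) * (v0 * v0 + v1 * v1 + v2 * v2 + v3 * v3)
  - (u0 * v0 + u1 * v1 + u2 * v2 + u3 * v3) ^+ 2.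
Proof. by rewrite /sqnorm6 !rc_row6 //=; ring. Qed.

Lemma Ppoly_wedge : Ppoly wedge = 0.
Proof. by rewrite /Ppoly !rc_row6 //=; ring. Qed.

End Wedge.

Section QuaternionMatrix.
Context {R : realType}.
Variables p0 p1 p2 p3 q0 q1 q2 q3 : R.

(* The matrix of x |-> p x q^* on the quaternions, in the basis (1, i, j, k). *)
Definition quat_entry (i j : nat) : R :=
  match i, j with
  | 0, 0 => p0*q0 + p1*q1 + p2*q2 + p3*q3
  | 0, 1 => p0*q1 - p1*q0 - p2*q3 + p3*q2
  | 0, 2 => p0*q2 + p1*q3 - p2*q0 - p3*q1
  | 0, 3 => p0*q3 - p1*q2 + p2*q1 - p3*q0
  | 1, 0 => -p0*q1 + p1*q0 - p2*q3 + p3*q2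
  | 1, 1 => p0*q0 + p1*q1 - p2*q2 - p3*q3
  | 1, 2 => -p0*q3 + p1*q2 + p2*q1 - p3*q0
  | 1, 3 => p0*q2 + p1*q3 + p2*q0 + p3*q1
  | 2, 0 => -p0*q2 + p1*q3 + p2*q0 - p3*q1
  | 2, 1 => p0*q3 + p1*q2 + p2*q1 + p3*q0
  | 2, 2 => p0*q0 - p1*q1 + p2*q2 - p3*q3
  | 2, 3 => -p0*q1 - p1*q0 + p2*q3 + p3*q2
  | 3, 0 => -p0*q3 - p1*q2 + p2*q1 + p3*q0
  | 3, 1 => -p0*q2 + p1*q3 - p2*q0 + p3*q1
  | 3, 2 => p0*q1 + p1*q0 + p2*q3 + p3*q2
  | 3, 3 => p0*q0 - p1*q1 - p2*q2 + p3*q3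
  | _, _ => 0
  end.

Definition quat_mx : 'M[R]_4 := \matrix_(i < 4, j < 4) quat_entry i j.

Let Np := qnorm p0 p1 p2 p3.
Let Nq := qnorm q0 q1 q2 q3.

Lemma quat_mx_orthogonal : quat_mx *m quat_mx^T = (Np * Nq)%:M.
Proof.
apply: ent_ext => i j lt_i4 lt_j4; rewrite ent_mul !ent_tr !ent_mx // ent_scalar //.
by case: i lt_i4 => [|[|[|[|i]]]] //= _; case: j lt_j4 => [|[|[|[|j]]]] //= _;
  rewrite /Np /Nq /qnorm; ring.
Qed.

Lemma quat_mx_conj_E12 : quat_mx *m E12 *m quat_mx^T =
  skewmx (sd_join (row6
    (Nq * hopf1 p0 p1 p2 p3) (Nq * hopf2 p0 p1 p2 p3) (Nq * hopf3 p0 p1 p2 p3)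
    (Np * hopf1 q0 q1 q2 q3) (Np * hopf2 q0 q1 q2 q3) (Np * hopf3 q0 q1 q2 q3))).
Proof.
apply: ent_ext => i j lt_i4 lt_j4; rewrite ent_conj_E12 !ent_mx //.
by case: i lt_i4 => [|[|[|[|i]]]] //= _; case: j lt_j4 => [|[|[|[|j]]]] //= _;
  rewrite ?rc_row6 //= /Np /Nq /qnorm /hopf1 /hopf2 /hopf3; field.
Qed.

End QuaternionMatrix.

Section Grassmannian.
Context {R : realType}.

Definition reflect3 : 'M[R]_4 :=
  diag_mx (\row_(j < 4) if val j == 3%N then -1 else 1).

Lemma ent_reflect3 i j : (i < 4)%N -> (j < 4)%N ->
  ent reflect3 i j = if i == j then (if i == 3%N then -1 else 1) else 0.
Proof.
move=> lt_i4 lt_j4; rewrite /ent /reflect3 !mxE -(inj_eq val_inj) /= !inordK //.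
by case: (i == j); rewrite ?mulr1n ?mulr0n.
Qed.

Lemma det_reflect3 : \det reflect3 = -1.
Proof. by rewrite det_diag !big_ord_recr big_ord0 /= !mxE /= !mul1r. Qed.

Lemma reflect3_orthogonal : reflect3 *m reflect3^T = 1%:M.
Proof.
apply: ent_ext => i j lt_i4 lt_j4.
rewrite ent_mul !ent_tr !ent_reflect3 // ent_scalar //.
by case: i lt_i4 => [|[|[|[|i]]]] //= _; case: j lt_j4 => [|[|[|[|j]]]] //= _; ring.
Qed.

Lemma reflect3_conj_E12 : reflect3 *m E12 *m reflect3^T = E12.
Proof.
apply: ent_ext => i j lt_i4 lt_j4.
rewrite ent_conj_E12 !ent_reflect3 // ent_E12 //.
by case: i lt_i4 => [|[|[|[|i]]]] //= _; case: j lt_j4 => [|[|[|[|j]]]] //= _; ring.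
Qed.

Lemma orthogonal_conj_E12_Grplus24 (Q : 'M[R]_4) :
  Q *m Q^T = 1%:M -> Grplus24 (Q *m E12 *m Q^T).
Proof.
move=> QQt; have : \det Q ^+ 2 = 1.
  by rewrite expr2 -{2}det_tr -det_mulmx QQt det1.
move/eqP; rewrite sqrf_eq1 => /orP[/eqP detQ|/eqP detQ]; first by exists Q.
exists (Q *m reflect3).
  split; first by rewrite trmx_mul mulmxA -(mulmxA Q) reflect3_orthogonal mulmx1.
  by rewrite det_mulmx detQ det_reflect3 mulrNN mulr1.
by rewrite trmx_mul -{2}reflect3_conj_E12 !mulmxA.
Qed.

Lemma skew_coords_conj_E12 (M : 'M[R]_4) : skew_coords (M *m E12 *m M^T) =
  wedge (ent M 0 0) (ent M 1 0) (ent M 2 0) (ent M 3 0)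
        (ent M 0 1) (ent M 1 1) (ent M 2 1) (ent M 3 1).
Proof.
apply: rc_ext => k lt_k6; rewrite !rc_row6 //.
by case: k lt_k6 => [|[|[|[|[|[|k]]]]]] //= _; rewrite ent_conj_E12; ring.
Qed.

Lemma skew_coords_Grplus24 (A : 'M[R]_4) : Grplus24 A -> plucker_sphere (skew_coords A).
Proof.
case=> Q [QQt _] <-; rewrite skew_coords_conj_E12; split; last exact: Ppoly_wedge.
have QtQ : Q^T *m Q = 1%:M by exact: mulmx1C.
have col_dot a b : (a < 4)%N -> (b < 4)%N ->
    ent Q 0 a * ent Q 0 b + ent Q 1 a * ent Q 1 b
    + ent Q 2 a * ent Q 2 b + ent Q 3 a * ent Q 3 b = (a == b)%:R.
  by move=> lt_a4 lt_b4; rewrite -[RHS]mulr1 -ent_scalar // -QtQ ent_mul !ent_tr.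
by rewrite sqnorm6_wedge !col_dot //= mulr1 expr0n subr0.
Qed.

Lemma S2xS2_Grplus24 (y : 'rV[R]_6) : S2xS2 y -> Grplus24 (skewmx (sd_join y)).
Proof.
case=> a_unit b_unit.
have [p0 [p1 [p2 [p3 [Np1 a1 a2 a3]]]]] := hopf_surjective a_unit.
have [q0 [q1 [q2 [q3 [Nq1 b1 b2 b3]]]]] := hopf_surjective b_unit.
have := quat_mx_conj_E12 p0 p1 p2 p3 q0 q1 q2 q3.
rewrite Np1 Nq1 !mul1r a1 a2 a3 b1 b2 b3 row6_rc => <-.
by apply: orthogonal_conj_E12_Grplus24; rewrite quat_mx_orthogonal Np1 Nq1 mulr1.
Qed.

Lemma plucker_sphere_Grplus24 : linear_equiv plucker_sphere (@Grplus24 R).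
Proof.
exists skewmx, skew_coords; split.
- exact: skewmx_linear.
- exact: skew_coords_linear.
- move=> _ [x Nx <-]; rewrite -(sd_splitK x).
  exact/S2xS2_Grplus24/sd_split_S2xS2.
- by move=> _ [A GA <-]; exact: skew_coords_Grplus24.
by split=> [x _|A /Grplus24_skew]; [exact: skewmxK | exact: skew_coordsK].
Qed.

End Grassmannian.

Theorem lemma4 (R : realType) (m1 m2 m3 m4 : R)
  (h1 : 0 < m1) (h2 : 0 < m2) (h3 : 0 < m3) (h4 : 0 < m4) :
  diffeomorphic (Mset m1 m2 m3 m4) (@Grplus24 R) /\
  diffeomorphic (Mset m1 m2 m3 m4) (@S2xS2 R).
Proof.
have M_N := Mset_plucker_sphere h1 h2 h3 h4.
split; apply: linear_equiv_diffeomorphic; apply: linear_equiv_trans M_N _.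
- exact: plucker_sphere_Grplus24.
- exact: plucker_sphere_S2xS2.
Qed.
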